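(* Let $(N_0,c,w,P)$ be an RS-situation and $(N_0,v)$ the corresponding RS-game. Then \[Core(N_0,v)=\Big\{x\in\mathbb{R}^{N_0}\ \Big|\ \sum_{i\in N_0}x_i=v(N_0);\ x_i\le v(\{0,i\})\text{ for all } i\in N;\ \sum_{i\in S}x_i\ge v(S)\text{ for all } S\subseteq N\Big\}.\]
   Context: Let $c\in\mathbb{R}$. An RS-problem is a triple $(c,w,p)$ where $w:\mathbb{R}_+\to(c,+\infty)$ is decreasing (non-increasing) and continuous, and $p:\mathbb{R}_+\to\mathbb{R}$ is decreasing (non-increasing) and continuous, satisfies $p(0)>w(0)$, and there exists $q>0$ with $p(q)=c$. An RS-situation is a tuple $(N_0,c,w,P)$ where $N=\{1,\dots,n\}$ is the set of retailers, $0$ denotes the supplier, $N_0=N\cup\{0\}$, $P=(p_1,\dots,p_n)$, and $(c,w,p_i)$ is an RS-problem for each $i\in N$. For $S\subseteq N$ write $S_0=S\cup\{0\}$. For $q\ge0$ and $\omega\in\mathbb{R}$, $\Pi_i^{ret}(q;\omega)=(p_i(q)-\omega)q$. For nonempty $S\subseteq N$, $(q_i^S)_{i\in S}$ is a fixed optimal solution of: maximize $\sum_{i\in S}(p_i(q_i)-w(q_S))q_i$ over $q\in\mathbb{R}_+^{S}$ subject to $p_i(q_i)\ge w(q_S)$ for all $i\in S$, where $q_S=\sum_{i\in S}q_i$; $q_S^S=\sum_{i\in S}q_i^S$. For $i\in N$, $q_i^c$ is a fixed optimal solution of: maximize $(p_i(q)-c)q$ over $q\ge0$ subject to $p_i(q)\ge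 c$. The corresponding RS-game $(N_0,v)$ is the TU game on $N_0$ with $v(\emptyset)=0$ and, for all $S\subseteq N$, $v(S)=\sum_{i\in S}\Pi_i^{ret}(q_i^S;w(q_S^S))$ and $v(S_0)=\sum_{i\in S}\Pi_i^{ret}(q_i^c;c)$. The core of a TU game $(N_0,v)$ is $Core(N_0,v)=\{x\in\mathbb{R}^{N_0}: \sum_{i\in N_0}x_i=v(N_0),\ \sum_{i\in T}x_i\ge v(T)\text{ for all }T\subset N_0\}$. *)

From HB Require Import structures.
From mathcomp Require Import all_boot all_order all_algebra.
From mathcomp Require Import all_classical all_reals all_analysis.
Set Implicit Arguments.
Unset Strict Implicit.
Unset Printing Implicit Defensive.
Import Order.TTheory GRing.Theory Num.Theory.
Import numFieldNormedType.Exports.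
Local Open Scope ring_scope.

(* Players: N_0 = option 'I_n, with None = supplier 0 and Some i = retailer i.
   Coalitions of retailers S ⊆ N are {set 'I_n}; coalitions of N_0 are
   {set option 'I_n}. *)

Definition nonneg_set (R : realType) : set R := [set x : R | 0 <= x]%classic.

Definition rs_problem (R : realType) (c : R) (w p : R -> R) : Prop :=
  (forall x, 0 <= x -> c < w x) /\
  (forall x y, 0 <= x -> x <= y -> w y <= w x) /\
  {within @nonneg_set R, continuous w}%classic /\
  (forall x y, 0 <= x -> x <= y -> p y <= p x) /\
  {within @nonneg_set R, continuous p}%classic /\
  w 0 < p 0 /\
  (exists q, 0 < q /\ p q = c).

Definition rs_situation (R : realType) (n : nat) (c : R) (w : R -> R)
  (P : 'I_n -> R -> R) : Prop := forall i, rs_problem c w (P i).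

Definition ret_profit (R : realType) (p : R -> R) (q om : R) : R := (p q - om) * q.

(* q_S = sum_{i in S} q_i ; a vector q in R^S is represented by 'I_n -> R
   (values outside S are irrelevant). *)
Definition coal_qty (R : realType) n (S : {set 'I_n}) (q : 'I_n -> R) : R :=
  \sum_(i in S) q i.

Definition coal_feasible (R : realType) n (w : R -> R) (P : 'I_n -> R -> R)
  (S : {set 'I_n}) (q : 'I_n -> R) : Prop :=
  (forall i, i \in S -> 0 <= q i) /\
  (forall i, i \in S -> w (coal_qty S q) <= P i (q i)).

Definition coal_obj (R : realType) n (w : R -> R) (P : 'I_n -> R -> R)
  (S : {set 'I_n}) (q : 'I_n -> R) : R :=
  \sum_(i in S) (P i (q i) - w (coal_qty S q)) * q i.

Definition coal_optimal (R : realType) n (w : R -> R) (P : 'I_n -> R -> R)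
  (S : {set 'I_n}) (q : 'I_n -> R) : Prop :=
  coal_feasible w P S q /\
  (forall q', coal_feasible w P S q' -> coal_obj w P S q' <= coal_obj w P S q).

Definition comp_optimal (R : realType) (c : R) (p : R -> R) (q : R) : Prop :=
  0 <= q /\ c <= p q /\
  (forall q', 0 <= q' -> c <= p q' -> (p q' - c) * q' <= (p q - c) * q).

(* The RS-game, given the fixed optimal solutions qS (q^S for each S) and qc. *)
Definition rs_game (R : realType) n (c : R) (w : R -> R) (P : 'I_n -> R -> R)
  (qS : {set 'I_n} -> 'I_n -> R) (qc : 'I_n -> R)
  (T : {set option 'I_n}) : R :=
  let S := [set i | Some i \in T] in
  if None \in T then \sum_(i in S) ret_profit (P i) (qc i) c
  else \sum_(i in S) ret_profit (P i) (qS S i) (w (coal_qty S (qS S))).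

Definition core (R : realType) n (v : {set option 'I_n} -> R)
  : set (option 'I_n -> R) :=
  [set x | \sum_(i in [set: option 'I_n]%SET) x i = v [set: option 'I_n]%SET /\
           (forall T : {set option 'I_n}, v T <= \sum_(i in T) x i)]%classic.

From HB Require Import structures.
From mathcomp Require Import all_boot all_order all_algebra.
From mathcomp Require Import all_classical all_reals all_analysis.
From mathcomp Require Import lra.
Set Implicit Arguments.
Unset Strict Implicit.
Unset Printing Implicit Defensive.
Import Order.TTheory GRing.Theory Num.Theory.
Import numFieldNormedType.Exports.
Local Open Scope ring_scope.

(* The only feature of an RS-game used is that v(S_0) = sum_(i in S) v({0,i}).
   If x is in the core, efficiency and the core constraint for N_0 \ {i} give
   x_i <= v(N_0) - v(N_0 \ {i}) = v({0,i}).  Conversely, under these upper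
   bounds and efficiency, sum_(S_0) x = v(N_0) - sum_(N \ S) x_i
   >= v(N_0) - sum_(N \ S) v({0,i}) = v(S_0), while the constraints for
   coalitions without the supplier are assumed outright. *)

Definition retailers n (T : {set option 'I_n}) : {set 'I_n} :=
  [set i | Some i \in T].

Lemma retailersT n : retailers [set: option 'I_n] = [set: 'I_n].
Proof. by apply/setP => i; rewrite !inE. Qed.

Lemma retailers_supplier_pair n (i : 'I_n) : retailers [set None; Some i] = [set i].
Proof. by apply/setP => j; rewrite !inE. Qed.

Lemma retailersC1 n (i : 'I_n) : retailers (~: [set Some i]) = ~: [set i].
Proof. by apply/setP => j; rewrite !inE. Qed.

Lemma imset_retailers n (T : {set option 'I_n}) :
  None \notin T -> Some @: retailers T = T.
Proof.
move=> T'N; apply/setP => -[i|]; first by rewrite (mem_imset _ _ (@Some_inj _)) inE.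
by rewrite (negbTE T'N); apply/imsetP => -[].
Qed.

Lemma big_option (R : zmodType) (T : finType) (F : option T -> R) :
  \sum_j F j = F None + \sum_i F (Some i).
Proof.
rewrite (bigD1 None) //=; congr (_ + _).
rewrite (reindex_omap Some id) //=; last by case.
by apply: eq_bigl => i; rewrite eqxx.
Qed.

Lemma big_option_in (R : zmodType) n (T : {set option 'I_n}) (x : option 'I_n -> R) :
  \sum_(j in T) x j =
    (if None \in T then x None else 0) + \sum_(i in retailers T) x (Some i).
Proof.
rewrite big_mkcond big_option [in RHS]big_mkcond; congr (_ + _).
by apply: eq_bigr => i _; rewrite inE.
Qed.

Lemma big_option_setT (R : zmodType) n (x : option 'I_n -> R) :
  \sum_(j in [set: option 'I_n]) x j = x None + \sum_i x (Some i).
Proof.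
rewrite big_option_in inE retailersT; congr (_ + _).
by apply: eq_bigl => i; rewrite inE.
Qed.

Lemma big_setC (R : zmodType) (I : finType) (A : {set I}) (F : I -> R) :
  \sum_i F i = \sum_(i in A) F i + \sum_(i in ~: A) F i.
Proof.
by rewrite (bigID (mem A)) /=; congr (_ + _); apply: eq_bigl => i; rewrite inE.
Qed.

Section SupplierAdditiveGame.

Variables (R : realType) (n : nat) (v : {set option 'I_n} -> R) (a : 'I_n -> R).

Hypothesis v_supplier :
  forall T : {set option 'I_n}, None \in T -> v T = \sum_(i in retailers T) a i.

Lemma v_supplier_pair (i : 'I_n) : v [set None; Some i] = a i.
Proof. by rewrite v_supplier ?retailers_supplier_pair ?big_set1 // !inE. Qed.

Lemma v_grand_coalition : v [set: option 'I_n] = \sum_i a i.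
Proof. by rewrite v_supplier ?retailersT ?inE //; apply: eq_bigl => i; rewrite inE. Qed.

Lemma core_le_supplier_pair x i :
  core v x -> x (Some i) <= v [set None; Some i].
Proof.
move=> [x_eff x_stable]; rewrite v_supplier_pair.
have := x_stable (~: [set Some i]).
rewrite v_supplier ?inE // big_option_in retailersC1 !inE /=.
move: x_eff; rewrite big_option_setT v_grand_coalition.
rewrite [\sum_i a i](big_setC [set i]) [\sum_i x (Some i)](big_setC [set i]) !big_set1.
lra.
Qed.

Lemma supplier_coalition_stable x (T : {set option 'I_n}) :
  \sum_(j in [set: option 'I_n]) x j = v [set: option 'I_n] ->
  (forall i, x (Some i) <= v [set None; Some i]) ->
  None \in T -> v T <= \sum_(j in T) x j.
Proof.
move=> x_eff x_le TN; rewrite v_supplier // big_option_in TN.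
have le_compl : \sum_(i in ~: retailers T) x (Some i) <= \sum_(i in ~: retailers T) a i.
  by apply: ler_sum => i _; rewrite -v_supplier_pair.
move: x_eff; rewrite big_option_setT v_grand_coalition.
rewrite [\sum_i a i](big_setC (retailers T)) [\sum_i x (Some i)](big_setC (retailers T)).
lra.
Qed.

Lemma core_supplier_additive :
  core v =
  [set x : option 'I_n -> R |
     \sum_(j in [set: option 'I_n]%SET) x j = v [set: option 'I_n]%SET /\
     (forall i, x (Some i) <= v [set None; Some i]%SET) /\
     (forall S : {set 'I_n}, v (Some @: S) <= \sum_(i in S) x (Some i))]%classic.
Proof.
apply/seteqP; split => x /=.
  move=> x_core; have [x_eff x_stable] := x_core.
  split=> //; split=> [i|S]; first exact: core_le_supplier_pair.
  by have := x_stable (Some @: S); rewrite big_imset // => ? ? _ _ [->].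
move=> [x_eff [x_le x_ret]]; split=> // T.
have [TN|T'N] := boolP (None \in T); first exact: supplier_coalition_stable.
rewrite -(imset_retailers T'N) big_imset; first exact: x_ret.
by move=> ? ? _ _ [->].
Qed.

End SupplierAdditiveGame.

Theorem theorem5p1 (R : realType) (n : nat) (c : R) (w : R -> R)
  (P : 'I_n -> R -> R) (qS : {set 'I_n} -> 'I_n -> R) (qc : 'I_n -> R) :
  rs_situation c w P ->
  (forall S : {set 'I_n}, S != finset.set0 -> coal_optimal w P S (qS S)) ->
  (forall i : 'I_n, comp_optimal c (P i) (qc i)) ->
  core (rs_game c w P qS qc) =
  [set x : option 'I_n -> R |
     \sum_(i in [set: option 'I_n]%SET) x i = rs_game c w P qS qc [set: option 'I_n]%SET /\
     (forall i : 'I_n, x (Some i) <= rs_game c w P qS qc [set None; Some i]%SET) /\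
     (forall S : {set 'I_n},
        rs_game c w P qS qc [set Some i | i in S]%SET <= \sum_(i in S) x (Some i))]%classic.
Proof.
move=> _ _ _.
apply: (core_supplier_additive (a := fun i => ret_profit (P i) (qc i) c)).
by move=> T TN; rewrite /rs_game TN.
Qed.
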